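(* Let $R$ be a commutative Noetherian ring of prime characteristic $p$, let $G$ be an $x$-torsion-free left $R[x,f]$-module, and let $N$ be a special annihilator submodule of $G$. Then $G/N$ is $x$-torsion-free.
   Context: $R[x,f]$ is the Frobenius skew polynomial ring: free left $R$-module on $(x^i)_{i\ge0}$, $xr=r^px$. A left $R[x,f]$-module $M$ is $x$-torsion-free if $xm=0$ implies $m=0$. A special annihilator submodule of $G$ is one of the form $\{g:\theta g=0\ \forall\theta\in\mathfrak{B}\}$ for some graded two-sided ideal $\mathfrak{B}=\bigoplus_n\mathfrak{b}_nx^n$ of $R[x,f]$ ($(\mathfrak{b}_n)$ an ascending chain of ideals of $R$). *)

From HB Require Import structures.
From mathcomp Require Import all_boot all_order all_algebra.
Set Implicit Arguments. Unset Strict Implicit. Unset Printing Implicit Defensive.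
Import Order.TTheory GRing.Theory Num.Theory.
Local Open Scope ring_scope.

Definition is_ideal (R : comNzRingType) (I : pred R) : Prop :=
  [/\ 0 \in I,
      (forall a b, a \in I -> b \in I -> a + b \in I) &
      (forall r a, a \in I -> r * a \in I)].

Definition noetherian (R : comNzRingType) : Prop :=
  forall I : nat -> pred R,
    (forall n, is_ideal (I n)) ->
    (forall n, {subset I n <= I n.+1}) ->
    exists N, forall n, (N <= n)%N -> I n =i I N.

(* A left module over the Frobenius skew polynomial ring R[x,f] (xr = r^p x)
   is an R-module G together with the action of x: an additive map
   phi : G -> G with phi (r *: m) = r^p *: phi m. *)
Definition frobenius_action (R : comNzRingType) (G : lmodType R) (p : nat)
    (phi : G -> G) : Prop :=
  (forall m1 m2, phi (m1 + m2) = phi m1 + phi m2) /\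
  (forall (r : R) m, phi (r *: m) = r ^+ p *: phi m).

Definition x_torsion_free (R : comNzRingType) (G : lmodType R) (phi : G -> G) : Prop :=
  forall m, phi m = 0 -> m = 0.

(* An element theta = \sum_i s_i x^i of R[x,f] (coefficient list s) acting on g. *)
Definition skew_act (R : comNzRingType) (G : lmodType R) (phi : G -> G)
    (s : seq R) (g : G) : G :=
  \sum_(i < size s) s`_i *: iter i phi g.

(* theta = \sum_i s_i x^i lies in the graded ideal B = \bigoplus_n b_n x^n. *)
Definition in_graded (R : comNzRingType) (b : nat -> pred R) (s : seq R) : Prop :=
  forall i, s`_i \in b i.

(* b is an ascending chain of ideals of R (so B is a graded two-sided ideal). *)
Definition graded_ideal_chain (R : comNzRingType) (b : nat -> pred R) : Prop :=
  (forall n, is_ideal (b n)) /\ (forall n, {subset b n <= b n.+1}).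

Definition special_ann (R : comNzRingType) (G : lmodType R) (phi : G -> G)
    (b : nat -> pred R) (g : G) : Prop :=
  forall s, in_graded b s -> skew_act phi s g = 0.

(* For theta = \sum_i s_i x^i one has x theta = theta' x with theta' = \sum_i s_i^p x^i,
   and theta' is again in B because each b_i is an ideal and p > 0.  Hence if x g is
   annihilated by B, then x (theta g) = theta' (x g) = 0, and x-torsion-freeness gives
   theta g = 0. *)

From HB Require Import structures.
From mathcomp Require Import all_boot all_order all_algebra.
Set Implicit Arguments. Unset Strict Implicit.
Import GRing.Theory.
Local Open Scope ring_scope.

Lemma ideal_exp (R : comNzRingType) (I : pred R) (a : R) (n : nat) :
  is_ideal I -> a \in I -> (0 < n)%N -> a ^+ n \in I.
Proof.
by case: n => // n [_ _ idealM] aI _; rewrite exprSr; apply: idealM.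
Qed.

Lemma in_graded_map_exp (R : comNzRingType) (b : nat -> pred R) (s : seq R) (n : nat) :
  (forall i, is_ideal (b i)) -> (0 < n)%N ->
  in_graded b s -> in_graded b (map (fun r => r ^+ n) s).
Proof.
move=> b_ideal n_gt0 sb i.
have [lt_i_s | le_s_i] := ltnP i (size s).
  by rewrite (nth_map 0) //; apply: ideal_exp.
by rewrite nth_default ?size_map //; case: (b_ideal i).
Qed.

Section FrobeniusAction.

Variables (R : comNzRingType) (G : lmodType R) (p : nat) (phi : G -> G).
Hypothesis phi_frob : frobenius_action p phi.

Lemma frobenius_action0 : phi 0 = 0.
Proof.
have [phiD _] := phi_frob.
by apply: (@addrI _ (phi 0)); rewrite -phiD !addr0.
Qed.

Lemma skew_act_frobenius (s : seq R) (g : G) :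
  phi (skew_act phi s g) = skew_act phi (map (fun r => r ^+ p) s) (phi g).
Proof.
have [phiD phiZ] := phi_frob.
rewrite /skew_act size_map (big_morph phi phiD frobenius_action0).
by apply: eq_bigr => i _; rewrite phiZ (nth_map 0) // -iterSr.
Qed.

End FrobeniusAction.

Theorem lemma3p1 (R : comNzRingType) (p : nat) (G : lmodType R) (phi : G -> G)
    (b : nat -> pred R) :
  noetherian R -> p \in [pchar R] ->
  frobenius_action p phi -> x_torsion_free phi ->
  graded_ideal_chain b ->
  forall g : G, special_ann phi b (phi g) -> special_ann phi b g.
Proof.
move=> _ pchar_p phi_frob torsion_free [b_ideal _] g ann_phi_g s sb.
have p_gt0 : (0 < p)%N by apply/prime_gt0/(pcharf_prime pchar_p).
apply: torsion_free.
rewrite (skew_act_frobenius phi_frob).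
exact/ann_phi_g/in_graded_map_exp.
Qed.
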